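(* Consider the following recursive procedure on input $(T,C,w)$, where $T=(V,E)$ is a tree, $w:V\to\mathbb R_{\ge0}$, and $C$ is a partial coloring with domain $\mathrm{support}(w)=\{v:w(v)>0\}$: if $V\setminus\mathrm{support}(w)$ is a cover of $(T,C)$, return $X=V\setminus\mathrm{support}(w)$; otherwise choose two pairs of (not necessarily distinct) vertices $(x_1,x_2)$, $(y_1,y_2)$ in $\mathrm{support}(w)$ with $C(x_1)=C(x_2)\neq C(y_1)=C(y_2)$ and $\mathrm{carrier}(\{x_1,x_2\})\cap\mathrm{carrier}(\{y_1,y_2\})\neq\emptyset$, let $\varepsilon=\min\{w(x_1),w(x_2),w(y_1),w(y_2)\}$, let $w_1=w-\varepsilon\cdot\mathbf 1_{\{x_1,x_2,y_1,y_2\}}$, and return the output of the procedure on $(T,C|_{\mathrm{support}(w_1)},w_1)$. Then the procedure is well defined (whenever $V\setminus\mathrm{support}(w)$ is not a cover, such pairs exist), terminates, and returns a cover $X$ of $(T,C)$ with $w(X)\le 4\,\mathrm{OPT}(T,C,w)$.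
   Context: For $U\subseteq V$, $\mathrm{carrier}(U)$ is the minimal connected subtree of $T$ containing $U$. A partial coloring of a tree is convex if it can be extended to a total coloring in which every color class induces a connected subtree. A set $X\subseteq V$ is a cover of $(T,C)$ if the restriction of $C$ to $\mathrm{Domain}(C)\setminus X$ is convex. $w(X)=\sum_{v\in X}w(v)$, and $\mathrm{OPT}(T,C,w)$ is the minimum of $w(X)$ over all covers $X$. *)

From mathcomp Require Import all_boot all_order all_algebra.
Set Implicit Arguments. Unset Strict Implicit. Unset Printing Implicit Defensive.
Import Order.TTheory GRing.Theory Num.Theory.
Local Open Scope ring_scope.

Section Defs.
Variables (V : finType) (K : eqType).

(* T = (V, e) is a tree: e symmetric, irreflexive, connected, and every edge
   is a bridge (minimally connected, i.e. acyclic). *)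
Definition remove_edge (e : rel V) (u v : V) : rel V :=
  fun a b => e a b && ~~ (((a == u) && (b == v)) || ((a == v) && (b == u))).

Definition is_tree (e : rel V) : Prop :=
  [/\ symmetric e, irreflexive e, (forall x y, connect e x y)
    & forall u v, e u v -> ~~ connect (remove_edge e u v) u v].

(* S induces a connected subgraph of T (the empty set counts as connected). *)
Definition induced (e : rel V) (S : {set V}) : rel V :=
  fun a b => [&& a \in S, b \in S & e a b].

Definition connectedb (e : rel V) (S : {set V}) : bool :=
  [forall x in S, forall y in S, connect (induced e S) x y].

Definition carrier (e : rel V) (U : {set V}) : {set V} :=
  \bigcap_(S : {set V} | connectedb e S && (U \subset S)) S.

(* Partial colorings: C v = None means v is uncolored. *)
Definition Domain (C : V -> option K) : {set V} := [set v | C v != None].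

Definition restrict (C : V -> option K) (S : {set V}) : V -> option K :=
  fun v => if v \in S then C v else None.

(* convex: extendable to a total coloring (colors in option K, None serving as
   an additional fresh color) in which every color class is connected. *)
Definition convex (e : rel V) (C : V -> option K) : Prop :=
  exists f : V -> option K,
    (forall v, v \in Domain C -> f v = C v) /\
    (forall c : option K, connectedb e [set v | f v == c]).

Definition is_cover (e : rel V) (C : V -> option K) (X : {set V}) : Prop :=
  convex e (restrict C (Domain C :\: X)).

Variable R : realFieldType.

Definition wsupp (w : V -> R) : {set V} := [set v | 0 < w v].

Definition weight (w : V -> R) (X : {set V}) : R := \sum_(v in X) w v.

Definition valid_choice (e : rel V) (C : V -> option K) (w : V -> R)
    (x1 x2 y1 y2 : V) : Prop :=
  [/\ [&& x1 \in wsupp w, x2 \in wsupp w, y1 \in wsupp w & y2 \in wsupp w],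
      C x1 = C x2, C y1 = C y2, C x1 != C y1
    & carrier e [set x1; x2] :&: carrier e [set y1; y2] != set0].

Definition eps_of (w : V -> R) (x1 x2 y1 y2 : V) : R :=
  Num.min (Num.min (w x1) (w x2)) (Num.min (w y1) (w y2)).

Definition new_weight (w : V -> R) (x1 x2 y1 y2 : V) : V -> R :=
  fun v => if v \in [set x1; x2; y1; y2] then w v - eps_of w x1 x2 y1 y2 else w v.

Definition proc_step (e : rel V) (p p' : (V -> option K) * (V -> R)) : Prop :=
  ~ is_cover e p.1 (~: wsupp p.2) /\
  exists x1 x2 y1 y2,
    valid_choice e p.1 p.2 x1 x2 y1 y2 /\
    p'.2 = new_weight p.2 x1 x2 y1 y2 /\
    p'.1 = restrict p.1 (wsupp (new_weight p.2 x1 x2 y1 y2)).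

(* proc_returns e C w X : some run of the (nondeterministic) procedure on
   input (T, C, w) returns X. *)
Inductive proc_returns (e : rel V) : (V -> option K) -> (V -> R) -> {set V} -> Prop :=
| ret_base C w :
    is_cover e C (~: wsupp w) -> proc_returns e C w (~: wsupp w)
| ret_step C w x1 x2 y1 y2 X :
    ~ is_cover e C (~: wsupp w) ->
    valid_choice e C w x1 x2 y1 y2 ->
    proc_returns e (restrict C (wsupp (new_weight w x1 x2 y1 y2)))
                   (new_weight w x1 x2 y1 y2) X ->
    proc_returns e C w X.

End Defs.

(* A partial coloring of a tree whose color classes have pairwise disjoint
   carriers is convex: it extends one vertex at a time. Hence, if
   V \ support(w) is not a cover, the carriers of two color classes meet, and a
   meeting point already lies in the carriers of two pairs, one from each
   class: this is a valid choice. Each step empties the support at a vertex of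
   weight eps, so the recursion terminates. Every cover contains one of the
   four chosen vertices, since a convex extension cannot give two meeting
   carriers different colors; so a step costs every cover at least eps and the
   returned set at most 4 eps, which is the local-ratio bound. *)

From Stdlib Require Import Classical.
From mathcomp Require Import all_boot all_order all_algebra zify lra.
Import Order.TTheory GRing.Theory Num.Theory.

Set Implicit Arguments.
Unset Strict Implicit.
Unset Printing Implicit Defensive.

Lemma card_set4_le (T : finType) (a b c d : T) : #|[set a; b; c; d]| <= 4.
Proof.
apply: leq_trans (leq_card_setU _ _) _; rewrite cards1 addn1 ltnS.
apply: leq_trans (leq_card_setU _ _) _; rewrite cards1 addn1 ltnS.
by apply: leq_trans (leq_card_setU _ _) _; rewrite !cards1.
Qed.

Section Tree.
Variables (V : finType) (e : rel V).
Implicit Types (S T U : {set V}) (u v x y : V).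

Lemma connectedbP S x y :
  connectedb e S -> x \in S -> y \in S -> connect (induced e S) x y.
Proof.
by move=> /forallP/(_ x)/implyP cS xS yS; move/(_ xS)/forallP/(_ y)/implyP: cS; apply.
Qed.

Lemma induced_sym S : symmetric e -> symmetric (induced e S).
Proof. by move=> se a b; rewrite /induced se andbCA. Qed.

Lemma connect_induced_subset S T x y :
  T \subset S -> connect (induced e T) x y -> connect (induced e S) x y.
Proof.
move=> /subsetP TS; apply: connect_sub => a b /and3P[aT bT eab].
by apply: connect1; rewrite /induced TS ?TS.
Qed.

Lemma connectedb_star S v :
  symmetric e -> (forall x, x \in S -> connect (induced e S) x v) -> connectedb e S.
Proof.
move=> se toV; apply/forallP => x; apply/implyP => xS; apply/forallP => y.
apply/implyP => yS; apply: connect_trans (toV x xS) _.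
by rewrite (sym_connect_sym (induced_sym S se)); apply: toV.
Qed.

Lemma connectedb_set1 v : connectedb e [set v].
Proof.
apply/forallP => x; apply/implyP; rewrite inE => /eqP->.
by apply/forallP => y; apply/implyP; rewrite inE => /eqP->.
Qed.

Lemma connectedb0 : connectedb e set0.
Proof. by apply/forallP => x; rewrite inE. Qed.

Lemma connectedbU1 S u v :
  symmetric e -> connectedb e S -> v \in S -> e v u -> connectedb e (u |: S).
Proof.
move=> se cS vS evu; apply: (connectedb_star (v := v) se) => x.
rewrite in_setU1 => /orP[/eqP-> | xS].
  by apply: connect1; rewrite /induced !in_setU1 eqxx vS orbT se evu.
by apply: connect_induced_subset (subsetUr _ _) (connectedbP cS xS vS).
Qed.

Lemma connect_exit S v u :
  v \in S -> u \notin S -> connect e v u ->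
  exists a b, [/\ a \in S, b \notin S & e a b].
Proof.
move=> vS uS /connectP[p pp Eu]; subst u.
elim: p v vS pp uS => [|b p IH] v vS /=; first by rewrite vS.
move=> /andP[evb pb] lS; have [bS | bS] := boolP (b \in S); first exact: IH pb lS.
by exists v, b.
Qed.

Lemma remove_edge_sym u v : symmetric e -> symmetric (remove_edge e u v).
Proof.
move=> se a b; rewrite /remove_edge se; congr (_ && _).
by case: (a == u); case: (b == v); case: (a == v); case: (b == u).
Qed.

Lemma sub_carrier U : U \subset carrier e U.
Proof. by apply/subsetP => x xU; apply/bigcapP => S /andP[_ /subsetP]; apply. Qed.

Lemma carrier_min U S : connectedb e S -> U \subset S -> carrier e U \subset S.
Proof. by move=> cS US; apply: bigcap_inf; rewrite cS US. Qed.

Lemma carrier0 : carrier e set0 = set0.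
Proof. by apply/eqP; rewrite -subset0 carrier_min ?connectedb0. Qed.

Lemma carrier_set1 v : carrier e [set v] = [set v].
Proof.
by apply/eqP; rewrite eqEsubset sub_carrier andbT carrier_min ?connectedb_set1.
Qed.

Hypothesis tree : is_tree e.

(* If a simple path left a connected set S, the tree edge by which it leaves
   would be a bridge joining two vertices connected inside S. *)
Lemma tree_path_sub S x p :
  connectedb e S -> x \in S -> last x p \in S -> path e x p -> uniq (x :: p) ->
  all (mem S) p.
Proof.
have [se _ _ bridge] := tree; move=> cS.
elim: p x => [//|a p IH] x xS /= lS /andP[exa pa] /andP[xNp up].
suff aS : a \in S by rewrite aS /=; exact: IH aS lS pa up.
apply/negPn/negP => aNS.
have x_last : connect (remove_edge e x a) x (last a p).
  apply: connect_sub (connectedbP cS xS lS) => s t /and3P[sS tS est].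
  apply: connect1; rewrite /remove_edge est /=.
  by apply/negP => /orP[]/andP[/eqP Es /eqP Et]; move: aNS; rewrite -?Es -?Et ?sS ?tS.
have a_last : connect (remove_edge e x a) a (last a p).
  apply/connectP; exists p => //.
  apply: (sub_in_path (P := [pred z | z != x])) pa.
    by move=> s t /= sx tx est; rewrite /remove_edge est (negbTE sx) (negbTE tx) !andbF.
  by apply/allP => z zp /=; apply: contraNneq xNp => <-.
rewrite (sym_connect_sym (remove_edge_sym x a se)) in a_last.
by move: (bridge x a exa); rewrite (connect_trans x_last a_last).
Qed.

Lemma carrier_connected U : connectedb e (carrier e U).
Proof.
have [_ _ conn _] := tree.
apply/forallP => x; apply/implyP => xC; apply/forallP => y; apply/implyP => yC.
case/connectP: (conn x y) => p px Ey; subst y.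
move: yC; case: (shortenP px) => q pq uq _ yC.
apply/connectP; exists q => //.
apply: (sub_in_path (P := mem (carrier e U))) (pq).
  by move=> s t /= sC tC est; rewrite /induced sC tC est.
apply/andP; split => //; apply/allP => z zq; apply/bigcapP => S /andP[cS US].
have inS v : v \in carrier e U -> v \in S by move=> /bigcapP; apply; rewrite cS.
by move/allP: (tree_path_sub cS (inS x xC) (inS _ yC) pq uq); apply.
Qed.

Lemma carrier_pairs U z :
  z \in carrier e U ->
  exists2 a1, a1 \in U & exists2 a2, a2 \in U & z \in carrier e [set a1; a2].
Proof.
have [se _ _ _] := tree.
have [-> | [a0 a0U]] := set_0Vmem U; first by rewrite carrier0 inE.
set S := \bigcup_(a in U) carrier e [set a0; a].
have cS : connectedb e S.
  apply: (connectedb_star (v := a0) se) => x /bigcupP[a aU xC].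
  have a0C : a0 \in carrier e [set a0; a] by rewrite (subsetP (sub_carrier _)) // !inE eqxx.
  apply: connect_induced_subset (connectedbP (carrier_connected _) xC a0C).
  by apply/subsetP => v vC; apply/bigcupP; exists a.
have US : U \subset S.
  apply/subsetP => a aU; apply/bigcupP; exists a => //.
  by rewrite (subsetP (sub_carrier _)) // !inE eqxx orbT.
by move/(subsetP (carrier_min cS US)) => /bigcupP[a aU zC]; exists a0 => //; exists a.
Qed.

End Tree.

Section Convexity.
Variables (V : finType) (K : eqType) (e : rel V).
Implicit Types (f g C : V -> option K) (D S X : {set V}) (c d : option K).

Definition color_class f D c : {set V} := [set v in D | f v == c].

Definition separated_classes f D :=
  forall c d, c != d ->
    carrier e (color_class f D c) :&: carrier e (color_class f D d) = set0.

Definition recolor f u c : V -> option K := fun v => if v == u then c else f v.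

Lemma color_class_recolor f D u c d :
  u \notin D ->
  color_class (recolor f u c) (u |: D) d =
    if d == c then u |: color_class f D d else color_class f D d.
Proof.
move=> uD; apply/setP => v; rewrite /color_class /recolor.
case: (eqVneq d c) => [-> | dc]; rewrite !inE; case: (eqVneq v u) => [-> | vu] //=.
- by rewrite eqxx.
- by rewrite (negbTE uD) eq_sym (negbTE dc).
Qed.

Lemma separated_recolor f D u c :
  separated_classes f D -> u \notin D ->
  carrier e (u |: color_class f D c) \subset u |: carrier e (color_class f D c) ->
  (forall d, d != c -> u \notin carrier e (color_class f D d)) ->
  separated_classes (recolor f u c) (u |: D).
Proof.
move=> sep uD sub fresh.
have new_class d : d != c ->
    carrier e (u |: color_class f D c) :&: carrier e (color_class f D d) = set0.
  move=> dc; apply/eqP; rewrite -subset0; apply/subsetP => z /setIP[/(subsetP sub)].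
  rewrite in_setU1 => /orP[/eqP-> | zc] zd; first by rewrite (negbTE (fresh d dc)) in zd.
  by rewrite -(sep c d) ?inE ?zc // eq_sym.
move=> c1 c2 c12; rewrite !color_class_recolor //.
case: (eqVneq c1 c) => [E1 | c1c]; case: (eqVneq c2 c) => [E2 | c2c].
- by rewrite E1 E2 eqxx in c12.
- by rewrite E1; apply: new_class.
- by rewrite E2 setIC; apply: new_class.
- exact: sep.
Qed.

Hypothesis tree : is_tree e.

(* Either some uncolored vertex already lies in the carrier of a class, or a
   vertex adjacent to the colored part lies in no carrier at all. *)
Lemma separated_extend1 f D u0 :
  separated_classes f D -> u0 \notin D ->
  exists u c, u \notin D /\ separated_classes (recolor f u c) (u |: D).
Proof.
have [se _ conn _] := tree; move=> sep u0D.
have [|no_inner] := boolP [exists u, exists a,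
    [&& u \notin D, a \in D & u \in carrier e (color_class f D (f a))]].
  case/existsP=> u /existsP[a /and3P[uD aD uC]]; exists u, (f a); split => //.
  apply: separated_recolor => // [|d da].
    apply: subset_trans (subsetUr _ _); apply: carrier_min (carrier_connected tree _) _.
    by rewrite subUset sub1set uC sub_carrier.
  by apply/negP => ud; move/setP/(_ u): (sep _ _ da); rewrite !inE ud uC.
have fresh u d : u \notin D -> u \notin carrier e (color_class f D d).
  move=> uD; have [-> | [a]] := set_0Vmem (color_class f D d); first by rewrite carrier0 inE.
  rewrite inE => /andP[aD /eqP <-].
  by apply/negP => uC; move/existsPn/(_ u)/existsPn/(_ a): no_inner; rewrite uD aD uC.
have [D0 | [v0 v0D]] := set_0Vmem D.
  exists u0, None; split => //; apply: separated_recolor => // [|d _]; last exact: fresh.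
  have -> : color_class f D None = set0 by apply/setP => v; rewrite !inE D0 inE.
  by rewrite setU0 carrier_set1 subsetUl.
have [a [b [aD bD eab]]] := connect_exit v0D u0D (conn v0 u0).
exists b, (f a); split => //; apply: separated_recolor => // [|d _]; last exact: fresh.
have aC : a \in carrier e (color_class f D (f a)).
  by rewrite (subsetP (sub_carrier _ _)) // inE aD eqxx.
apply: carrier_min; first exact: connectedbU1 se (carrier_connected tree _) aC eab.
exact/setUS/sub_carrier.
Qed.

Lemma separated_extend f D :
  separated_classes f D -> exists g, {in D, g =1 f} /\ separated_classes g setT.
Proof.
have [n] := ubnP #|~: D|; elim: n f D => // n IH f D hn sep.
have [DC0 | [u0]] := set_0Vmem (~: D).
  by exists f; split => //; rewrite -(setCK D) DC0 setC0 in sep.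
rewrite inE => u0D; have [u [c [uD sepu]]] := separated_extend1 sep u0D.
have hn' : #|~: (u |: D)| < n.
  by move: (cardsC (u |: D)) (cardsC D); rewrite cardsU1 uD /=; lia.
have [g [gf sepg]] := IH _ _ hn' sepu.
exists g; split => // v vD; rewrite gf ?in_setU1 ?vD ?orbT // /recolor.
by case: eqP => // vu; rewrite -vu vD in uD.
Qed.

Lemma separated_setT_connected g c :
  separated_classes g setT -> connectedb e [set v | g v == c].
Proof.
move=> sep; suff -> : [set v | g v == c] = carrier e (color_class g setT c).
  exact: carrier_connected.
apply/eqP; rewrite eqEsubset; apply/andP; split.
  by apply/subsetP => v vc; apply: (subsetP (sub_carrier _ _)); rewrite !inE in vc *.
apply/subsetP => z zC; rewrite inE; apply/negPn/negP => zc.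
rewrite eq_sym in zc; move/setP/(_ z): (sep c (g z) zc).
by rewrite !inE zC (subsetP (sub_carrier _ _)) // !inE eqxx.
Qed.

Lemma separated_convex C : separated_classes C (Domain C) -> convex e C.
Proof.
case/separated_extend=> g [gC sepg]; exists g; split; first exact: gC.
by move=> c; apply: separated_setT_connected.
Qed.

End Convexity.

Section Covers.
Variables (V : finType) (K : eqType) (e : rel V).
Implicit Types (C : V -> option K) (S X : {set V}).

Lemma Domain_restrict C S : Domain (restrict C S) = S :&: Domain C.
Proof. by apply/setP => v; rewrite !inE /restrict; case: (v \in S); rewrite ?eqxx. Qed.

Lemma convex_sub C1 C2 : {in Domain C2, C2 =1 C1} -> convex e C1 -> convex e C2.
Proof.
move=> C21 [f [fC fconn]]; exists f; split => // v vD.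
have E := C21 v vD; rewrite E fC // inE -E; by rewrite inE in vD.
Qed.

Lemma convex_restrict C S : convex e C -> convex e (restrict C S).
Proof. by apply: convex_sub => v; rewrite Domain_restrict /restrict => /setIP[->]. Qed.

Lemma is_cover_restrict C S X : is_cover e C X -> is_cover e (restrict C S) X.
Proof.
apply: convex_sub => v; rewrite !Domain_restrict /restrict !inE.
by case/and3P=> /andP[vX /andP[vS vC]] _ _; rewrite vX vS vC.
Qed.

Lemma is_cover_unrestrict C S X :
  ~: S \subset X -> is_cover e (restrict C S) X -> is_cover e C X.
Proof.
move=> /subsetP SX; apply: convex_sub => v; rewrite Domain_restrict /restrict !inE.
case/andP=> /andP[vX vC] _; have vS : v \in S.
  by apply: contraNT vX => vS; apply: SX; rewrite inE.
by rewrite vX vS vC.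
Qed.

Lemma convex_pair_carriers C x1 x2 y1 y2 :
  convex e C ->
  [&& x1 \in Domain C, x2 \in Domain C, y1 \in Domain C & y2 \in Domain C] ->
  C x1 = C x2 -> C y1 = C y2 -> C x1 != C y1 ->
  carrier e [set x1; x2] :&: carrier e [set y1; y2] = set0.
Proof.
case=> f [fC fconn] /and4P[x1D x2D y1D y2D] cx cy cxy.
have pair_class a b : a \in Domain C -> b \in Domain C -> C a = C b ->
    carrier e [set a; b] \subset [set v | f v == C a].
  move=> aD bD cab; apply: carrier_min (fconn _) _.
  by apply/subsetP => v; rewrite !inE => /orP[]/eqP->; rewrite fC // ?cab eqxx.
apply/eqP; rewrite -subset0; apply/subsetP => z /setIP[].
move=> /(subsetP (pair_class _ _ x1D x2D cx)); rewrite inE => /eqP fzx.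
move=> /(subsetP (pair_class _ _ y1D y2D cy)); rewrite inE => /eqP fzy.
by rewrite -fzx fzy eqxx in cxy.
Qed.

End Covers.

Local Open Scope ring_scope.

Section Weights.
Variables (V : finType) (R : realFieldType).
Implicit Types (w : V -> R) (X Z : {set V}).

Lemma weight_ge0 w X : (forall v, 0 <= w v) -> 0 <= weight w X.
Proof. by move=> w_ge0; apply: sumr_ge0. Qed.

Lemma weight_compl_wsupp w : (forall v, 0 <= w v) -> weight w (~: wsupp w) = 0.
Proof.
move=> w_ge0; apply: big1 => v; rewrite !inE -leNgt => wv_le0.
by apply/eqP; rewrite eq_le wv_le0 w_ge0.
Qed.

Section Step.
Variables (w : V -> R) (x1 x2 y1 y2 : V).
Local Notation S := [set x1; x2; y1; y2].
Local Notation eps := (eps_of w x1 x2 y1 y2).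
Local Notation w1 := (new_weight w x1 x2 y1 y2).

Lemma eps_of_le v : v \in S -> eps <= w v.
Proof. by rewrite !inE /eps_of => /orP[/orP[/orP[]|]|]/eqP->; rewrite !ge_min lexx ?orbT. Qed.

Lemma eps_of_attained : exists2 m, m \in S & w m = eps.
Proof.
rewrite /eps_of !minEle; do !case: ifP => _.
all: by (eexists; last reflexivity); rewrite !inE eqxx ?orbT.
Qed.

Lemma new_weight_ge0 v : 0 <= w v -> 0 <= w1 v.
Proof.
rewrite /new_weight; case: ifP => // vS wv_ge0.
by rewrite subr_ge0 eps_of_le.
Qed.

Lemma weight_new_weight Z : weight w Z = weight w1 Z + eps *+ #|Z :&: S|.
Proof.
rewrite /weight (eq_bigr (fun v => w1 v + (if v \in S then eps else 0))); last first.
  by move=> v _; rewrite /new_weight; case: ifP; rewrite ?subrK ?addr0.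
rewrite big_split /=; congr (_ + _).
rewrite (big_setID S) /= [X in _ + X]big1 ?addr0 => [|v /setDP[_ /negbTE ->] //].
by rewrite -sumr_const; apply: eq_bigr => v /setIP[_ ->].
Qed.

Hypothesis S_supp :
  [&& x1 \in wsupp w, x2 \in wsupp w, y1 \in wsupp w & y2 \in wsupp w].

Lemma eps_of_gt0 : 0 < eps.
Proof. by move: S_supp; rewrite !inE /eps_of !lt_min => /and4P[-> -> -> ->]. Qed.

Lemma wsupp_new_weight : wsupp w1 \proper wsupp w.
Proof.
have [m mS wm] := eps_of_attained; have eps_gt0 := eps_of_gt0.
apply/properP; split.
  by apply/subsetP => v; rewrite !inE /new_weight; case: ifP => // _; lra.
by exists m; rewrite !inE /new_weight ?mS wm ?eps_gt0 // subrr ltxx.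
Qed.

End Step.
End Weights.

Section Procedure.
Variables (V : finType) (K : eqType) (R : realFieldType) (e : rel V).
Implicit Types (C : V -> option K) (w : V -> R) (X Y : {set V}).

Lemma proc_step_wsupp (p q : (V -> option K) * (V -> R)) :
  proc_step e p q -> (#|wsupp q.2| < #|wsupp p.2|)%N.
Proof.
case=> _ [x1 [x2 [y1 [y2 [[S_supp _ _ _ _] [-> _]]]]]].
exact/proper_card/wsupp_new_weight.
Qed.

Lemma proc_step_wf :
  well_founded (fun q p : (V -> option K) * (V -> R) => proc_step e p q).
Proof.
move=> p; have [n] := ubnP #|wsupp p.2|; elim: n p => [|n IH] p p_lt.
  by rewrite ltn0 in p_lt.
constructor=> q /proc_step_wsupp q_lt; apply: IH.
by apply: leq_trans q_lt _; rewrite -ltnS.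
Qed.

Lemma exists_valid_choice C w :
  is_tree e -> Domain C = wsupp w -> ~ is_cover e C (~: wsupp w) ->
  exists x1 x2 y1 y2, valid_choice e C w x1 x2 y1 y2.
Proof.
move=> tree CD not_cover; apply: NNPP => no_choice; apply: not_cover.
apply/convex_restrict/(separated_convex tree) => c d cd.
have class_supp c' v : v \in color_class C (Domain C) c' -> v \in wsupp w /\ C v = c'.
  by rewrite inE -CD => /andP[vD /eqP].
apply/eqP; rewrite -subset0; apply/subsetP => z /setIP[zc zd].
have [x1 /class_supp[x1w cx1] [x2 /class_supp[x2w cx2] zx]] := carrier_pairs tree zc.
have [y1 /class_supp[y1w cy1] [y2 /class_supp[y2w cy2] zy]] := carrier_pairs tree zd.
case: no_choice; exists x1, x2, y1, y2; split.
- by rewrite x1w x2w y1w y2w.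
- by rewrite cx1 cx2.
- by rewrite cy1 cy2.
- by rewrite cx1 cy1.
- by apply/set0Pn; exists z; rewrite inE zx zy.
Qed.

Lemma cover_meets_choice C w x1 x2 y1 y2 Y :
  Domain C = wsupp w -> valid_choice e C w x1 x2 y1 y2 -> is_cover e C Y ->
  Y :&: [set x1; x2; y1; y2] != set0.
Proof.
move=> CD [S_supp cx cy cxy meet] Ycover; apply: contra_neq meet.
set S := [set x1; x2; y1; y2] => YS0; set CY := restrict C (Domain C :\: Y).
have CY_on x : x \in S -> x \in wsupp w -> x \in Domain CY /\ CY x = C x.
  move=> xS xw; have xY : x \notin Y.
    by apply/negP => xY; move: (conj xY xS) => /setIP; rewrite YS0 inE.
  have CYx : CY x = C x by rewrite /CY /restrict inE xY CD xw.
  by split => //; rewrite inE CYx; move: xw; rewrite -CD inE.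
move/and4P: S_supp => [x1w x2w y1w y2w].
have [x1S x2S y1S y2S] : [/\ x1 \in S, x2 \in S, y1 \in S & y2 \in S].
  by rewrite !inE !eqxx ?orbT.
have [x1D CYx1] := CY_on x1 x1S x1w; have [x2D CYx2] := CY_on x2 x2S x2w.
have [y1D CYy1] := CY_on y1 y1S y1w; have [y2D CYy2] := CY_on y2 y2S y2w.
apply: (convex_pair_carriers (C := CY) Ycover); rewrite ?x1D ?x2D ?y1D ?y2D //.
- by rewrite CYx1 CYx2.
- by rewrite CYy1 CYy2.
- by rewrite CYx1 CYy1.
Qed.

Lemma proc_returns_approx C w X :
  proc_returns e C w X -> (forall v, 0 <= w v) -> Domain C = wsupp w ->
  [/\ ~: wsupp w \subset X, is_cover e C X &
      forall Y, is_cover e C Y -> weight w X <= 4 * weight w Y].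
Proof.
elim=> {C w X} [C w cover | C w x1 x2 y1 y2 X _ choice _ IH] w_ge0 CD.
  by split=> // Y _; rewrite weight_compl_wsupp // mulr_ge0 ?weight_ge0.
have [S_supp _ _ _ _] := choice.
have w1_ge0 v : 0 <= new_weight w x1 x2 y1 y2 v by exact: new_weight_ge0.
have supp1 := proper_sub (wsupp_new_weight S_supp).
have CD1 : Domain (restrict C (wsupp (new_weight w x1 x2 y1 y2))) =
           wsupp (new_weight w x1 x2 y1 y2).
  by rewrite Domain_restrict CD; apply/setIidPl.
have [X_supp1 X_cover X_approx] := IH w1_ge0 CD1.
split => [|| Y Y_cover].
- by apply: subset_trans X_supp1; rewrite setCS; exact: supp1.
- exact: is_cover_unrestrict X_supp1 X_cover.
- have YS : (1 <= #|Y :&: [set x1; x2; y1; y2]|)%N.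
    by rewrite card_gt0; apply: cover_meets_choice CD choice Y_cover.
  have XS : (#|X :&: [set x1; x2; y1; y2]| <= 4)%N.
    exact: leq_trans (subset_leq_card (subsetIr _ _)) (card_set4_le _ _ _ _).
  have := X_approx Y (is_cover_restrict _ Y_cover).
  have eps_ge0 := ltW (eps_of_gt0 S_supp).
  rewrite -(ler_nat R) in XS; rewrite -(ler_nat R) in YS.
  by rewrite !(weight_new_weight w x1 x2 y1 y2) -!(mulr_natr (eps_of _ _ _ _ _)); nra.
Qed.

End Procedure.

Theorem mainTheorem6 (V : finType) (K : eqType) (R : realFieldType)
    (e : rel V) (C : V -> option K) (w : V -> R) :
  is_tree e ->
  (forall v, 0 <= w v) ->
  Domain C = wsupp w ->
  [/\ (~ is_cover e C (~: wsupp w) ->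
        exists x1 x2 y1 y2, valid_choice e C w x1 x2 y1 y2),
      Acc (fun q p => proc_step e p q) (C, w)
    & forall X, proc_returns e C w X ->
        is_cover e C X /\
        (forall Y, is_cover e C Y -> weight w X <= 4 * weight w Y)].
Proof.
move=> tree w_ge0 CD; split.
- exact: exists_valid_choice.
- exact: proc_step_wf.
- by move=> X /proc_returns_approx/(_ w_ge0 CD)[].
Qed.
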